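(* Let $G=(V,E)$ be a directed unweighted graph with diameter $D=3h+z$, where $h\ge0$, $z\in\{0,1,2\}$, let $\Delta\ge1$, and let $\tilde h\ge h$ be an integer. Let $\hat D$ be the output of Approx-Diam-Sparse$(G,\tilde h)$. Then $2h+z\le\hat D\le D$.
   Context: $d(u,v)$ is the shortest-path distance from $u$ to $v$; $d^{\mathrm{out}}(v)=\max_u d(v,u)$, $d^{\mathrm{in}}(v)=\max_u d(u,v)$; $B^{\mathrm{out}}(v,r)=\{u:d(v,u)\le r\}$; for $H\subseteq V$, $d(v,H)=\min_{u\in H}d(v,u)$ ($=\infty$ if $H=\emptyset$). Approx-Diam-Sparse$(G,\tilde h)$ with parameter $\Delta$: let $H$ be the set of vertices of outdegree at least $\Delta$; compute $d^{\mathrm{out}}(x)$ for every $x\in H$; compute $d(v,H)$ for all $v$ and pick $w$ maximizing $d(w,H)$; compute $d^{\mathrm{out}}(w)$; let $h'=\min\{\tilde h+1,d(w,H)\}$ and compute $d^{\mathrm{in}}(v)$ for every $v\in B^{\mathrm{out}}(w,h')$; output $\hat D=\max\big(\max_{x\in H}d^{\mathrm{out}}(x),\,d^{\mathrm{out}}(w),\,\max_{v\in B^{\mathrm{out}}(w,h')}d^{\mathrm{in}}(v)\big)$. *)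

From mathcomp Require Import all_boot.
Set Implicit Arguments. Unset Strict Implicit. Unset Printing Implicit Defensive.

Section Graph.
Variables (T : finType) (e : rel T).

Definition walk (u v : T) (n : nat) : bool :=
  [exists p : n.-tuple T, path e u p && (last u p == v)].

(* shortest-path distance d(u,v): least n with a walk of length n.
   Shortest walks have < #|T| edges, so searching 0..#|T|-1 is exhaustive;
   the value #|T| is returned when v is unreachable from u. *)
Definition dist (u v : T) : nat := find (walk u v) (iota 0 #|T|).

Definition dout (v : T) : nat := \max_(u : T) dist v u.
Definition din (v : T) : nat := \max_(u : T) dist u v.
Definition diameter : nat := \max_(u : T) \max_(v : T) dist u v.

Definition ball_out (v : T) (r : nat) : {set T} := [set u | dist v u <= r].

(* d(v,H) = min_{x in H} d(v,x); only meaningful for H nonempty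
   (the empty case, d = infinity, is treated separately below). *)
Definition dist_set (v : T) (H : {set T}) : nat :=
  \big[minn/#|T|]_(x in H) dist v x.

Definition heavy (Delta : nat) : {set T} :=
  [set x | Delta <= #|[set y | e x y]|].

(* output of Approx-Diam-Sparse(G, ht) with parameter Delta, given the
   chosen vertex w (any maximizer of d(w,H)) *)
Definition approx_diam_sparse (Delta ht : nat) (w : T) : nat :=
  let H := heavy Delta in
  let h' := if H == set0 then ht.+1 else minn ht.+1 (dist_set w H) in
  maxn (maxn (\max_(x in H) dout x) (dout w))
       (\max_(v in ball_out w h') din v).

End Graph.

From mathcomp Require Import all_boot.
From mathcomp Require Import zify.
Set Implicit Arguments. Unset Strict Implicit. Unset Printing Implicit Defensive.

(* The upper bound holds because M is a maximum of eccentricities, each at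
   most D.  For the lower bound fix a diametral pair a, b (d(a,b) = D) and let
   H be the set of heavy vertices, r the sweep radius h' of the algorithm.
   - If H is nonempty and d(w,H) <= h, then d(a,H) <= d(w,H) <= h by the
     choice of w, so some x in H has d(a,x) <= h and
     D <= d(a,x) + d(x,b) <= h + dout(x) <= h + M.
   - Otherwise r >= h + 1.  Walking from w towards b yields a vertex y with
     d(w,y) <= r and D <= din(y) + (dout(w) - r), hence D <= 2M - (h + 1),
     which forces M >= 2h + z since z < 3.
   The file first develops walks and shortest-path distances (triangle
   inequality, splitting a shortest path), then the two "witness" lemmas
   behind the two cases, the bounds relating the output to its ingredients,
   and finally the theorem. *)

Section Walks.
Variables (T : finType) (e : rel T).

Lemma walkP u v n :
  reflect (exists p : seq T, [/\ size p = n, path e u p & last u p = v])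
          (walk e u v n).
Proof.
apply: (iffP existsP).
  move=> [p /andP[p_path /eqP p_last]].
  by exists (val p); rewrite size_tuple.
move=> [p [<- p_path p_last]].
by exists (in_tuple p); rewrite /= p_path p_last eqxx.
Qed.

Lemma walk_cat u v w n m : walk e u v n -> walk e v w m -> walk e u w (n + m).
Proof.
move=> /walkP[p [<- p_path p_last]] /walkP[q [<- q_path q_last]]; apply/walkP.
by exists (p ++ q); rewrite size_cat cat_path last_cat p_last p_path q_path.
Qed.

Lemma walk_split u v n k : walk e u v n -> k <= n ->
  exists y, walk e u y k /\ walk e y v (n - k).
Proof.
move=> /walkP[p [<- p_path p_last]] le_kn.
move: p_path; rewrite -[p in path _ _ p](cat_take_drop k p) cat_path.
move=> /andP[path_l path_r].
exists (last u (take k p)); split; apply/walkP.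
  by exists (take k p); split; rewrite ?size_takel.
exists (drop k p); split; rewrite ?size_drop //.
by rewrite -p_last -[in RHS](cat_take_drop k p) last_cat.
Qed.

End Walks.

Section Distances.
Variables (T : finType) (e : rel T).
Hypothesis strongly_connected : forall u v : T, connect e u v.

(* Loop-free paths have fewer than #|T| edges, so in a strongly connected
   graph every v is reached from u by a walk the search in dist inspects. *)
Lemma short_walk u v : exists2 n, n < #|T| & walk e u v n.
Proof.
have /connectP[p p_path p_last] := strongly_connected u v.
case: (shortenP p_path) p_last => q q_path q_uniq _ q_last.
exists (size q); last by apply/walkP; exists q.
by have := max_card (mem (u :: q)); rewrite (card_uniqP q_uniq) /=.
Qed.

Lemma dist_walk u v : walk e u v (dist e u v) /\ dist e u v < #|T|.
Proof.
have [n lt_nT walk_n] := short_walk u v.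
have has_walk : has (walk e u v) (iota 0 #|T|).
  by apply/hasP; exists n; rewrite ?mem_iota.
have := has_walk; rewrite has_find size_iota => lt_dT.
by have := nth_find 0 has_walk; rewrite nth_iota // add0n.
Qed.

Lemma dist_min u v n : walk e u v n -> dist e u v <= n.
Proof.
move=> walk_n; case: (ltnP n #|T|) => [lt_nT | le_Tn]; last first.
  by apply: leq_trans le_Tn; apply: ltnW; exact: (dist_walk u v).2.
rewrite leqNgt; apply/negP => lt_nd.
by have := before_find 0 lt_nd; rewrite nth_iota // add0n walk_n.
Qed.

Lemma dist_tri u v w : dist e u w <= dist e u v + dist e v w.
Proof. exact/dist_min/walk_cat/(dist_walk v w).1/(dist_walk u v).1. Qed.

Lemma dist_split u v k : k <= dist e u v ->
  exists y, dist e u y <= k /\ dist e y v <= dist e u v - k.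
Proof.
move=> le_kd; have [y [walk_uy walk_yv]] := walk_split (dist_walk u v).1 le_kd.
by exists y; split; apply: dist_min.
Qed.

End Distances.

Section Eccentricities.
Variables (T : finType) (e : rel T).

Lemma dist_le_dout u v : dist e u v <= dout e u.
Proof. exact: (leq_bigmax v). Qed.

Lemma dist_le_din u v : dist e u v <= din e v.
Proof. exact: (leq_bigmax (F := fun u => dist e u v) u). Qed.

Lemma dout_le_diameter u : dout e u <= diameter e.
Proof. exact: (leq_bigmax (F := fun u => dout e u) u). Qed.

Lemma din_le_diameter v : din e v <= diameter e.
Proof.
apply/bigmax_leqP => u _.
exact: leq_trans (dist_le_dout u v) (dout_le_diameter u).
Qed.

Lemma diameter_attained (w : T) : exists a b, dist e a b = diameter e.
Proof.
have T_gt0 : 0 < #|T| by apply/card_gt0P; exists w.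
have [a diam_a] := eq_bigmax (fun u => dout e u) T_gt0.
have [b dout_b] := eq_bigmax (fun v => dist e a v) T_gt0.
by exists a, b; rewrite /diameter diam_a -dout_b.
Qed.

Lemma dist_set_le v (H : {set T}) x : x \in H -> dist_set e v H <= dist e v x.
Proof.
rewrite /dist_set => x_in_H.
elim: (index_enum T) (mem_index_enum x) => [|i r IH] //; rewrite inE big_cons.
case/orP => [/eqP<- | x_in_r]; first by rewrite x_in_H geq_minl.
by case: (i \in H); [apply: leq_trans (geq_minr _ _) (IH x_in_r) | exact: IH].
Qed.

End Eccentricities.

Section Witnesses.
Variables (T : finType) (e : rel T).
Hypothesis strongly_connected : forall u v : T, connect e u v.

Lemma dist_set_attained v (H : {set T}) : H != set0 ->
  exists2 x, x \in H & dist_set e v H = dist e v x.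
Proof.
move=> /set0Pn[x0 x0_in_H].
have : dist_set e v H = #|T| \/
       exists2 x, x \in H & dist_set e v H = dist e v x.
  apply: (big_ind (fun r => r = #|T| \/ exists2 x, x \in H & r = dist e v x)).
  - by left.
  - by move=> m n m_ok n_ok; rewrite /minn; case: ifP.
  - by move=> x x_in_H; right; exists x.
case=> // dist_set_T.
have := dist_set_le e v x0_in_H; have := (dist_walk strongly_connected v x0).2.
lia.
Qed.

Lemma heavy_witness a b (H : {set T}) : H != set0 ->
  exists2 x, x \in H & dist e a b <= dist_set e a H + dout e x.
Proof.
move=> H_ne0; have [x x_in_H ->] := dist_set_attained a H_ne0.
exists x => //; apply: leq_trans (dist_tri strongly_connected a x b) _.
by rewrite leq_add2l dist_le_dout.
Qed.

(* If b itself lies in the ball take y = b;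
   otherwise take y on a shortest w-b path at distance r from w. *)
Lemma ball_witness a b w r :
  exists2 y, dist e w y <= r & dist e a b <= din e y + (dout e w - r).
Proof.
case: (leqP (dist e w b) r) => [le_wb_r | lt_r_wb].
  by exists b => //; apply: leq_trans (dist_le_din e a b) (leq_addr _ _).
have [y [wy_le yb_le]] := dist_split strongly_connected (ltnW lt_r_wb).
exists y => //; apply: leq_trans (dist_tri strongly_connected a y b) _.
apply: leq_add; first exact: dist_le_din.
by apply: leq_trans yb_le (leq_sub2r _ (dist_le_dout _ _ _)).
Qed.

End Witnesses.

Section Algorithm.
Variables (T : finType) (e : rel T) (Delta ht : nat) (w : T).

(* The radius h' of the ball around w swept by the algorithm (the value
   bound by the let in approx_diam_sparse); an empty H counts as d(w,H) = oo. *)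
Definition sweep_radius : nat :=
  if heavy e Delta == set0 then ht.+1
  else minn ht.+1 (dist_set e w (heavy e Delta)).

Lemma approx_ge_dout_heavy x :
  x \in heavy e Delta -> dout e x <= approx_diam_sparse e Delta ht w.
Proof.
move=> x_heavy; apply: leq_trans (leq_maxl _ _).
apply: leq_trans (leq_maxl _ _).
exact: (leq_bigmax_cond (P := fun x => x \in heavy e Delta)).
Qed.

Lemma approx_ge_dout_w : dout e w <= approx_diam_sparse e Delta ht w.
Proof. by apply: leq_trans (leq_maxl _ _); apply: leq_maxr. Qed.

Lemma approx_ge_din_ball v :
  dist e w v <= sweep_radius -> din e v <= approx_diam_sparse e Delta ht w.
Proof.
move=> v_in_ball; apply: leq_trans (leq_maxr _ _).
apply: (leq_bigmax_cond (P := fun v => v \in ball_out e w sweep_radius)).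
by rewrite inE.
Qed.

Lemma sweep_radius_gt h : h <= ht ->
  ~~ ((heavy e Delta != set0) && (dist_set e w (heavy e Delta) <= h)) ->
  h < sweep_radius.
Proof.
rewrite /sweep_radius => le_h_ht; case: ifP => [_ _ | _]; first by [].
by rewrite /= -ltnNge leq_min ltnS le_h_ht.
Qed.

Lemma approx_le_diameter : approx_diam_sparse e Delta ht w <= diameter e.
Proof.
rewrite !geq_max dout_le_diameter andbT.
by apply/andP; split; apply/bigmax_leqP => v _;
  [exact: dout_le_diameter | exact: din_le_diameter].
Qed.

End Algorithm.

Theorem lemma9 (T : finType) (e : rel T) (Delta ht h z : nat) (w : T) :
  (forall u v : T, connect e u v) ->
  0 < Delta ->
  z < 3 ->
  diameter e = 3 * h + z ->
  h <= ht ->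
  (forall v : T, dist_set e v (heavy e Delta) <= dist_set e w (heavy e Delta)) ->
  2 * h + z <= approx_diam_sparse e Delta ht w <= diameter e.
Proof.
move=> conn _ lt_z3 diamE le_h_ht w_farthest.
rewrite approx_le_diameter andbT.
have [a [b dist_abE]] := diameter_attained e w.
case: (boolP ((heavy e Delta != set0) && (dist_set e w (heavy e Delta) <= h))).
  move=> /andP[H_ne0 near_w].
  have [x x_heavy dist_ab_le] := heavy_witness conn a b H_ne0.
  have near_a := leq_trans (w_farthest a) near_w.
  have := approx_ge_dout_heavy ht w x_heavy; lia.
move=> far_w; have lt_h_r := sweep_radius_gt le_h_ht far_w.
have [y y_in_ball dist_ab_le] :=
  ball_witness conn a b w (sweep_radius e Delta ht w).
have := approx_ge_din_ball y_in_ball; have := approx_ge_dout_w e Delta ht w.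
lia.
Qed.
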